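(* For any reals $\underline{w},\overline{w},B$ with $0<\underline{w}\le\overline{w}\le B$, there exist a hospital $h$ with budget $B_h=B$, a finite set $X_h$ of contracts of $h$ whose minimum wage is $\underline{w}$ and maximum wage is $\overline{w}$, and an additive utility function $f_h$ on $X_h$ with nonnegative values, such that every choice function $\mathrm{Ch}_h:2^{X_h}\to2^{X_h}$ satisfying LAD and COM has $w_h(\mathrm{Ch}_h(X'))>\overline{w}\cdot(B-\overline{w})/\underline{w}$ for some $X'\subseteq X_h$.
   Context: A contract of hospital $h$ is $x=(d,h,w)$ with doctor $d$ and wage $x_W=w>0$. For $Y\subseteq X_h$, $w_h(Y)=\sum_{x\in Y}x_W$ and the additive utility is $f_h(Y)=\sum_{x\in Y}f_h(x)$. A choice function is a map $\mathrm{Ch}_h:2^{X_h}\to2^{X_h}$ with $\mathrm{Ch}_h(Y)\subseteq Y$. LAD: for all $Y''\subseteq Y'\subseteq X_h$, $|\mathrm{Ch}_h(Y'')|\le|\mathrm{Ch}_h(Y')|$. COM: for all $Y''\subseteq Y'\subseteq X_h$ with $w_h(Y'')\le\max\{B_h,w_h(\mathrm{Ch}_h(Y'))\}$, $f_h(\mathrm{Ch}_h(Y'))\ge f_h(Y'')$. *)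

From mathcomp Require Import all_boot all_order all_algebra.
From mathcomp Require Import reals.
Set Implicit Arguments. Unset Strict Implicit. Unset Printing Implicit Defensive.
Import Order.TTheory GRing.Theory Num.Theory.
Local Open Scope ring_scope.

(* Contracts of a single hospital h are elements of a finite type C (this is X_h);
   each contract x carries a doctor [doc x] and a wage [wage x]. *)
Section Defs.
Variables (R : realType) (C : finType).

Definition wsum (wage : C -> R) (Y : {set C}) : R := \sum_(x in Y) wage x.
Definition fsum (f : C -> R) (Y : {set C}) : R := \sum_(x in Y) f x.

Definition is_choice (Ch : {set C} -> {set C}) : Prop :=
  forall Y, Ch Y \subset Y.

Definition LAD (Ch : {set C} -> {set C}) : Prop :=
  forall Y2 Y1 : {set C}, Y2 \subset Y1 -> (#|Ch Y2| <= #|Ch Y1|)%N.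

Definition COM (B : R) (wage f : C -> R) (Ch : {set C} -> {set C}) : Prop :=
  forall Y2 Y1 : {set C}, Y2 \subset Y1 ->
    wsum wage Y2 <= Num.max B (wsum wage (Ch Y1)) ->
    fsum f Y2 <= fsum f (Ch Y1).
End Defs.

(** The hospital has k := floor(B / wl) contracts of each of two kinds: cheap
    ones of wage wl and utility 1, and expensive ones of wage wu and utility
    k + 1.  All cheap contracts together fit in the budget, so by COM the choice
    from them keeps all k of them, and by LAD the choice S from the whole market
    has at least k contracts.  If S misses an expensive contract while its s
    cheap contracts cost at least wu, then swapping these cheap contracts for
    that expensive one stays within w(S) and raises utility (k + 1 > s),
    against COM.  Hence either S holds all k expensive contracts or
    s * wl < wu, and in both cases w(S) exceeds wu (B - wu) / wl because
    B < (k + 1) wl. *)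
From mathcomp Require Import all_boot all_order all_algebra.
From mathcomp Require Import reals.
From mathcomp Require Import lra.
Set Implicit Arguments. Unset Strict Implicit. Unset Printing Implicit Defensive.
Import Order.TTheory GRing.Theory Num.Theory.
Local Open Scope ring_scope.

Lemma exists_floor_mul (R : archiFieldType) (a b : R) : 0 < a -> a <= b ->
  exists k : nat, [/\ (0 < k)%N, k%:R * a <= b & b < k.+1%:R * a].
Proof.
move=> a_gt0 le_ab.
have b_a_ge0 : 0 <= b / a by rewrite divr_ge0 ?ltW ?(lt_le_trans a_gt0).
have /andP[lo hi] := truncn_itv b_a_ge0.
exists (Num.truncn (b / a)); split; last by rewrite -ltr_pdivrMr.
  by rewrite truncn_gt0 ler_pdivlMr // mul1r.
by rewrite -ler_pdivlMr.
Qed.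

Lemma sum_two_valued (R : pzSemiRingType) (C : finType) (H S : {set C}) (a b : R)
    (F : C -> R) :
  (forall x, F x = if x \in H then a else b) ->
  \sum_(x in S) F x = a * #|S :&: H|%:R + b * #|S :\: H|%:R.
Proof.
move=> F_def; rewrite (big_setID H) /= !mulr_natr -!sumr_const.
congr (_ + _); apply: eq_bigr => x; rewrite !inE F_def.
  by case/andP=> _ ->.
by case/andP=> /negbTE ->.
Qed.

Lemma exchange_bound (R : realFieldType) (wl wu B k t s : R) :
  0 < wl -> wl <= wu -> B < (k + 1) * wl -> 0 <= s -> k <= t + s ->
  k <= t \/ s * wl < wu ->
  wu * (B - wu) < (wu * t + wl * s) * wl.
Proof.
move=> wl_gt0 le_wl_wu B_lt s_ge0 k_le k_le_t_or_cheap.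
have wu_gt0 : 0 < wu := lt_le_trans wl_gt0 le_wl_wu.
have wuwl_ge0 : 0 <= wu * wl by rewrite ltW ?mulr_gt0.
have budget : wu * B < wu * ((k + 1) * wl) by rewrite ltr_pM2l.
case: k_le_t_or_cheap => [k_le_t | cheap_lt].
  have : 0 <= wu * (wu - wl) by rewrite mulr_ge0 ?subr_ge0 // ltW.
  have : 0 <= wu * wl * (t - k) by rewrite mulr_ge0 ?subr_ge0.
  have : 0 <= wl * s * wl by rewrite !mulr_ge0 // ltW.
  lra.
have : 0 <= wu * wl * (t + s - k) by rewrite mulr_ge0 ?subr_ge0.
have : 0 <= (wu - wl) * (wu - s * wl) by rewrite mulr_ge0 ?subr_ge0 // ltW.
lra.
Qed.

Section TwoTierMarket.
Variables (R : realType) (k : nat).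

Definition expensive : {set bool * 'I_k} := setX [set true] setT.
Definition cheap : {set bool * 'I_k} := ~: expensive.

Definition tier (a b : R) (x : bool * 'I_k) : R := if x.1 then a else b.

Lemma card_expensive : #|expensive| = k.
Proof. by rewrite cardsX cards1 cardsT card_ord mul1n. Qed.

Lemma card_cheap : #|cheap| = k.
Proof.
apply/eqP; rewrite -(eqn_add2l k) -{1}card_expensive cardsC.
by rewrite card_prod card_bool card_ord mul2n addnn.
Qed.

Lemma sum_tier a b (S : {set bool * 'I_k}) :
  \sum_(x in S) tier a b x = a * #|S :&: expensive|%:R + b * #|S :\: expensive|%:R.
Proof. by apply: sum_two_valued => -[[] i]; rewrite !inE. Qed.

Lemma sum_tier_expensive a b (S : {set bool * 'I_k}) : S \subset expensive ->
  \sum_(x in S) tier a b x = a * #|S|%:R.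
Proof.
move=> S_exp; have /eqP S_exp0 : S :\: expensive == set0 by rewrite setD_eq0.
by rewrite sum_tier (setIidPl S_exp) S_exp0 cards0 mulr0 addr0.
Qed.

Lemma sum_tier_cheap a b (S : {set bool * 'I_k}) : S \subset cheap ->
  \sum_(x in S) tier a b x = b * #|S|%:R.
Proof.
move=> S_cheap; have S_exp0 : S :&: expensive = set0.
  by apply/disjoint_setI0; rewrite disjoints_subset.
by rewrite sum_tier S_exp0 setDE (setIidPl S_cheap) cards0 mulr0 add0r.
Qed.

Variables (wl wu B : R) (Ch : {set bool * 'I_k} -> {set bool * 'I_k}).
Hypotheses (cheap_in_budget : k%:R * wl <= B) (Ch_choice : is_choice Ch)
  (Ch_LAD : LAD Ch) (Ch_COM : COM B (tier wu wl) (tier k.+1%:R 1) Ch).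

Lemma choice_keeps_cheap : (#|cheap| <= #|Ch cheap|)%N.
Proof.
rewrite -(ler_nat R) -[X in X <= _]mul1r -[X in _ <= X]mul1r.
rewrite -(sum_tier_cheap k.+1%:R) // -(sum_tier_cheap k.+1%:R _ (Ch_choice _)).
apply: Ch_COM (subxx _) _.
by rewrite /wsum sum_tier_cheap // card_cheap le_max mulrC cheap_in_budget.
Qed.

Lemma choice_is_large :
  (k <= #|Ch setT :&: expensive| + #|Ch setT :\: expensive|)%N.
Proof.
have := leq_trans choice_keeps_cheap (Ch_LAD (subsetT cheap)).
by rewrite card_cheap cardsID.
Qed.

Lemma choice_exchange : (#|Ch setT :&: expensive| < k)%N ->
  #|Ch setT :\: expensive|%:R * wl < wu.
Proof.
set S := Ch setT; set t := #|S :&: expensive|; set s := #|S :\: expensive|.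
move=> t_lt_k; rewrite ltNge; apply/negP => swap_affordable.
have /subsetPn[y y_exp y_notin] : ~~ (expensive \subset S :&: expensive).
  by apply/negP => /subset_leq_card; rewrite card_expensive leqNgt t_lt_k.
set Y := y |: (S :&: expensive).
have Y_exp : Y \subset expensive by rewrite subUset sub1set y_exp subsetIr.
have card_Y : #|Y| = t.+1 by rewrite cardsU1 y_notin.
have s_le_k : s%:R <= k%:R :> R.
  rewrite ler_nat -card_cheap; exact: subset_leq_card (subsetDr S expensive).
have := Ch_COM (subsetT Y); rewrite /wsum /fsum.
rewrite !(sum_tier_expensive _ _ Y_exp) !sum_tier card_Y -/S -/t -/s -natr1 le_max.
have -> : wu * (t%:R + 1) <= wu * t%:R + wl * s%:R by lra.
rewrite orbT => /(_ isT).
lra.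
Qed.

End TwoTierMarket.

(* [contract x] is the triple (d, h, w) of the paper; C plays the role of X_h. *)
Theorem theorem4 (R : realType) (wl wu B : R) :
  0 < wl -> wl <= wu -> wu <= B ->
  exists (C : finType) (hosp : nat) (contract : C -> nat * nat * R)
         (f : C -> R),
    let wage := fun x => (contract x).2 in
    injective contract /\
    (forall x, (contract x).1.2 = hosp) /\
    (forall x, 0 < wage x) /\
    ((exists x, wage x = wl) /\ (forall x, wl <= wage x)) /\
    ((exists x, wage x = wu) /\ (forall x, wage x <= wu)) /\
    (forall x, 0 <= f x) /\
    forall Ch : {set C} -> {set C},
      is_choice Ch -> LAD Ch -> COM B wage f Ch ->
      exists X' : {set C}, wu * (B - wu) / wl < wsum wage (Ch X').
Proof.
move=> wl_gt0 le_wl_wu le_wu_B.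
have [k [k_gt0 cheap_in_budget budget_lt]] :=
  exists_floor_mul wl_gt0 (le_trans le_wl_wu le_wu_B).
exists (bool * 'I_k)%type, 0%N, (fun x => (pickle x, 0%N, tier wu wl x)).
exists (tier k.+1%:R 1).
have i0 : 'I_k := Ordinal k_gt0.
split; first by move=> x y [/(pcan_inj pickleK)].
split; first by [].
split; first by move=> [[] i] /=; rewrite /tier /= ?(lt_le_trans wl_gt0).
split; first by split; [exists (false, i0) | case=> [[] i]].
split; first by split; [exists (true, i0) | case=> [[] i]].
split; first by move=> [[] i]; rewrite /tier /= ?ler01.
move=> Ch Ch_choice Ch_LAD Ch_COM; exists setT.
rewrite /wsum /= sum_tier ltr_pdivrMr //.
apply: (exchange_bound (k := k%:R)); rewrite -?natrD ?ler_nat ?natr1 //.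
- exact: choice_is_large cheap_in_budget Ch_choice Ch_LAD Ch_COM.
- have [k_le_t|t_lt_k] := leqP k #|Ch setT :&: expensive k|; [by left | right].
  exact: choice_exchange Ch_COM t_lt_k.
Qed.
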